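(* Let $k\ge 2$, $G=\Theta(2,2,2k)$, $m\ge 4$, and let $L$ be an $m$-assignment for $G$. If $wz\in E(G)$ is an edge for which there exist $x\in L(w)-L(z)$ and $y\in L(z)-L(w)$, then there are at least $(m-1)^{2k-1}(m-2)^2$ proper $L$-colorings of $G$ that color $w$ with $x$ and $z$ with $y$.
   Context: $\Theta(l_1,l_2,l_3)$ denotes two end vertices joined by three internally disjoint paths of lengths $l_1,l_2,l_3$. An $m$-assignment $L$ assigns to each vertex a set of $m$ colors; a proper $L$-coloring is a proper coloring $f$ with $f(v)\in L(v)$ for each vertex $v$. *)

From mathcomp Require Import all_boot.
Set Implicit Arguments. Unset Strict Implicit. Unset Printing Implicit Defensive.

(* Concrete labelling of Theta(2,2,2k) on vertices 0 .. 2k+2: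
   0 and 1 are the two end vertices;
   2 is the internal vertex of the first path of length 2 (0-2-1);
   3 is the internal vertex of the second path of length 2 (0-3-1);
   4, 5, ..., 2k+2 are the 2k-1 internal vertices of the path of length 2k
   (0-4-5-...-(2k+2)-1). *)
Definition theta_nv (k : nat) : nat := (2 * k + 3)%N.

Definition theta_dir_edge (k i j : nat) : bool :=
  [|| (i == 0) && (j == 2), (i == 2) && (j == 1),
      (i == 0) && (j == 3), (i == 3) && (j == 1),
      (i == 0) && (j == 4),
      [&& 4 <= i, j == i.+1 & j <= 2 * k + 2]
    | (i == 2 * k + 2) && (j == 1)].

Definition theta_adj (k : nat) : rel 'I_(theta_nv k) :=
  fun i j => theta_dir_edge k i j || theta_dir_edge k j i.

Arguments theta_adj k : clear implicits.

Definition proper_L_coloring (k : nat) (C : finType)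
    (L : 'I_(theta_nv k) -> {set C}) (f : {ffun 'I_(theta_nv k) -> C}) : bool :=
  [forall v, f v \in L v] &&
  [forall u, forall v, theta_adj k u v ==> (f u != f v)].

From mathcomp Require Import all_boot zify.
Set Implicit Arguments. Unset Strict Implicit. Unset Printing Implicit Defensive.

(* Colour the vertices one at a time, starting from the precoloured edge wz, in an
   order in which every vertex has at most one earlier neighbour, except for two
   vertices with at most two.  A vertex with d earlier neighbours has at least m - d
   colours of its list left whatever the earlier choices, so there are at least
   (m-1)^(2k-1) (m-2)^2 colourings; the start w -> x, z -> y is proper as x <> y.
   If wz lies on the path of length 2k, walk along that path away from wz in both
   directions, then take the two middle vertices 2 and 3, each seeing both end
   vertices.  If wz lies on a path of length 2, take the other end vertex, then the
   other middle vertex, then walk the long path from 0 to 1: only its last internal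
   vertex sees two coloured neighbours. *)

Lemma card_dep_pairs (T1 T2 : finType) (A : {set T1}) (B : T1 -> {set T2}) :
  #|[set p : T1 * T2 | (p.1 \in A) && (p.2 \in B p.1)]| = \sum_(a in A) #|B a|.
Proof.
rewrite -sum1_card.
transitivity (\sum_(a in A) \sum_(b in B a) 1); last by apply: eq_bigr => a _; rewrite sum1_card.
by rewrite pair_big_dep /=; apply: eq_bigl => p; rewrite inE.
Qed.

Lemma prod_subn_ge (V : finType) (A : {set V}) (d : V -> nat) (a b : V) (m : nat) :
  a \in A -> b \in A -> a != b -> d a <= 2 -> d b <= 2 ->
  {in A, forall v, v != a -> v != b -> d v <= 1} ->
  (m - 1) ^ (#|A| - 2) * (m - 2) ^ 2 <= \prod_(v in A) (m - d v).
Proof.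
move=> aA bA ab da db dv.
rewrite (bigD1 a) // (bigD1 b) /=; last by rewrite bA eq_sym.
set B := [pred v | (v \in A) && (v != a) && (v != b)].
have card_B : #|B| = #|A| - 2.
  rewrite (cardD1 a A) (cardD1 b [predD1 A & a]) aA !inE eq_sym ab bA /= addnA addKn.
  by apply: eq_card => v; rewrite !inE andbC (andbC (v != a)).
have prod_B : (m - 1) ^ (#|A| - 2) <= \prod_(v | (v \in A) && (v != a) && (v != b)) (m - d v).
  rewrite -card_B -prod_nat_const; apply: leq_prod => v /andP[/andP[vA va] vb].
  by rewrite leq_sub2l // dv.
rewrite mulnA mulnC expnS expn1; apply: leq_mul prod_B.
exact: leq_mul (leq_sub2l _ _) (leq_sub2l _ _).
Qed.

Section GreedyColoring.

Variables (V C : finType) (adj : rel V) (L : V -> {set C}) (m : nat).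
Hypotheses (adj_sym : symmetric adj) (adj_irr : irreflexive adj).
Hypothesis card_L : forall v, #|L v| = m.

Definition backdeg (r : V -> nat) (v : V) : nat := #|[set u | (r u < r v) && adj v u]|.

Definition greedy_order (S : {set V}) (r : V -> nat) (a b : V) : Prop :=
  [/\ forall v, (r v == 0) = (v \in S),
      {in [pred v | 0 < r v] &, injective r},
      [/\ a != b, 0 < r a & 0 < r b],
      backdeg r a <= 2 /\ backdeg r b <= 2
    & forall v, 0 < r v -> v != a -> v != b -> backdeg r v <= 1].

Variables (w z : V) (x y : C).

(* Vertices outside [S] carry the dummy colour [x], so each colouring of [S] is counted once. *)
Definition colorings_on (S : {set V}) : {set {ffun V -> C}} :=
  [set f : {ffun V -> C} | [&& [forall v in S, f v \in L v],
                               [forall u in S, forall v in S, adj u v ==> (f u != f v)],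
                               [forall v in ~: S, f v == x], f w == x & f z == y]].

Lemma card_colorings_on_setU1 (S : {set V}) (v : V) (d : nat) :
  w \in S -> z \in S -> v \notin S -> #|[set u in S | adj v u]| <= d ->
  #|colorings_on S| * (m - d) <= #|colorings_on (v |: S)|.
Proof.
move=> wS zS vS deg_v.
pose free (f : {ffun V -> C}) := L v :\: [set f u | u in [set u in S | adj v u]].
pose D := [set p : {ffun V -> C} * C | (p.1 \in colorings_on S) && (p.2 \in free p.1)].
pose ext (p : {ffun V -> C} * C) := [ffun u => if u == v then p.2 else p.1 u].
have card_D : #|colorings_on S| * (m - d) <= #|D|.
  rewrite card_dep_pairs -sum_nat_const; apply: leq_sum => f _.
  rewrite cardsD card_L leq_sub2l //; apply: leq_trans deg_v.
  exact: leq_trans (subset_leq_card (subsetIr _ _)) (leq_imset_card _ _).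
have ext_inj : {in D &, injective ext}.
  move=> [f c] [g c'] /[!inE] /andP[/= + _] /andP[/= + _] /ffunP ext_fg.
  move=> /and5P[_ _ /forall_inP f_out _ _] /and5P[_ _ /forall_inP g_out _ _].
  have vSC : v \in ~: S by rewrite inE.
  have := ext_fg v; rewrite !ffunE eqxx /= => ->; congr pair.
  apply/ffunP => u; have := ext_fg u; rewrite !ffunE.
  by case: eqP => [-> _|//]; rewrite (eqP (f_out v vSC)) (eqP (g_out v vSC)).
have ext_D : ext @: D \subset colorings_on (v |: S).
  apply/subsetP => _ /imsetP[[f c] /[!inE] /andP[/= f_col c_free] ->].
  move: f_col c_free => /and5P[/forall_inP f_L /forall_inP f_prop /forall_inP f_out fw fz].
  move=> /andP[c_nbr c_L].
  have [wv zv] : w != v /\ z != v by split; apply: contraNneq vS => <-.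
  rewrite /ext !ffunE /= (negbTE wv) (negbTE zv) fw fz !andbT; apply/and3P; split.
  - apply/forall_inP => u; rewrite ffunE in_setU1; case: eqP => [-> //|_] /=; exact: f_L.
  - apply/forall_inP => u u_in; apply/forall_inP => u' u'_in; rewrite !ffunE.
    move: u_in u'_in; rewrite !in_setU1.
    case: (eqVneq u v) => [->|uv]; case: (eqVneq u' v) => [->|u'v] /=.
    + by rewrite adj_irr.
    + move=> _ u'S; apply/implyP => vu'; apply: contra c_nbr => /eqP ->.
      by apply/imsetP; exists u' => //; rewrite inE u'S.
    + move=> uS _; apply/implyP => uv'; rewrite eq_sym; apply: contra c_nbr => /eqP ->.
      by apply/imsetP; exists u => //; rewrite inE uS adj_sym.
    + by move=> uS u'S; apply: (forall_inP (f_prop u uS)).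
  - apply/forall_inP => u; rewrite !inE negb_or ffunE => /andP[/negbTE -> uS].
    by apply: f_out; rewrite inE.
apply: leq_trans card_D _.
by rewrite -(card_in_imset ext_inj); apply: subset_leq_card.
Qed.

Lemma colorings_on_pair_gt0 :
  w != z -> x \in L w -> y \in L z -> x != y -> 0 < #|colorings_on [set w; z]|.
Proof.
move=> wz xL yL xy; apply/card_gt0P.
exists [ffun u => if u == z then y else x]; rewrite inE !ffunE eqxx (negbTE wz) /=.
rewrite !eqxx !andbT; apply/and3P; split.
- by apply/forall_inP => u /set2P[] ->; rewrite ffunE ?eqxx ?(negbTE wz).
- apply/forall_inP => u /set2P[] ->; apply/forall_inP => u' /set2P[] ->;
    by rewrite !ffunE ?adj_irr // eqxx (negbTE wz) ?xy ?implybT // eq_sym xy implybT.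
- by apply/forall_inP => u; rewrite !inE negb_or ffunE => /andP[_ /negbTE ->].
Qed.

Lemma colorings_on_setT :
  colorings_on [set: V] =
  [set f : {ffun V -> C} | [&& [forall v, f v \in L v],
                               [forall u, forall v, adj u v ==> (f u != f v)],
                               f w == x & f z == y]].
Proof.
apply/setP => f; rewrite !inE.
have -> : [forall v in ~: [set: V], f v == x] by apply/forall_inP => v; rewrite !inE.
congr [&& _, _ & _]; first by apply: eq_forallb => v; rewrite in_setT.
by apply: eq_forallb => u; rewrite in_setT; apply: eq_forallb => v; rewrite in_setT.
Qed.

Lemma card_colorings_greedy (r : V -> nat) :
  {in [pred v | 0 < r v] &, injective r} -> r w = 0 -> r z = 0 ->
  #|colorings_on [set v | r v == 0]| * \prod_(v | 0 < r v) (m - backdeg r v) <=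
  #|colorings_on [set: V]|.
Proof.
move=> r_inj rw rz.
suff grow t : #|colorings_on [set v | r v == 0]| * \prod_(v | 0 < r v <= t) (m - backdeg r v)
              <= #|colorings_on [set v | r v <= t]|.
  have r_le v : r v <= \max_u r u by apply: leq_bigmax.
  have := grow (\max_u r u).
  rewrite (eq_bigl [pred v | 0 < r v]) => [|v]; last by rewrite /= r_le andbT.
  by congr (_ <= #|colorings_on _|); apply/setP => v; rewrite !inE r_le.
elim: t => [|t IH].
  rewrite big_pred0 => [|v]; last by rewrite ltnNge andNb.
  by rewrite muln1; apply/eq_leq; congr #|colorings_on _|; apply/setP => v; rewrite !inE leqn0.
have [v /eqP rv|no_t1] := pickP [pred v | r v == t.+1]; last first.
  have le_S u : (r u <= t.+1) = (r u <= t) by rewrite leq_eqVlt ltnS; move: (no_t1 u) => /= ->.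
  rewrite (eq_bigl [pred u | 0 < r u <= t]) => [|u]; last by rewrite /= le_S.
  by congr (_ <= #|colorings_on _|): IH; apply/setP => u; rewrite !inE le_S.
have rS u : (r u == t.+1) = (u == v).
  by apply/eqP/eqP => [ru|->//]; apply: r_inj; rewrite ?inE /= ?ru ?rv.
rewrite (bigD1 v) /=; last by rewrite rv /=.
rewrite (eq_bigl [pred u | 0 < r u <= t]) => [|u] /=; last first.
  rewrite [r u <= _]leq_eqVlt ltnS rS.
  by case: (eqVneq u v) => [->|_]; rewrite ?rv ?ltnn ?andbF ?andbT.
have -> : [set u | r u <= t.+1] = v |: [set u | r u <= t].
  by apply/setP => u; rewrite !inE [r u <= _]leq_eqVlt ltnS rS.
rewrite mulnCA; apply: leq_trans (leq_mul (leqnn _) IH) _.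
rewrite mulnC; apply: card_colorings_on_setU1; rewrite ?inE ?rw ?rz ?rv ?ltnn //.
by apply/eq_leq/eq_card => u; rewrite !inE rv ltnS.
Qed.

Theorem card_colorings_greedy_order (r : V -> nat) (a b : V) :
  w != z -> x \in L w -> y \in L z -> x != y -> greedy_order [set w; z] r a b ->
  (m - 1) ^ (#|V| - 4) * (m - 2) ^ 2 <= #|colorings_on [set: V]|.
Proof.
move=> wz xL yL xy [r0 r_inj [ab ra rb] [da db] d1].
have [rw rz] : r w = 0 /\ r z = 0 by split; apply/eqP; rewrite r0 !inE eqxx ?orbT.
have -> : #|V| - 4 = #|[set v | 0 < r v]| - 2.
  have /eq_card -> : [set v | 0 < r v] =i ~: [set w; z].
    by move=> v; rewrite !inE -in_set2 -r0 lt0n.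
  by rewrite cardsCs setCK cards2 wz -subnDA.
apply: leq_trans (card_colorings_greedy r_inj rw rz).
have -> : [set v | r v == 0] = [set w; z] by apply/setP => v; rewrite inE r0.
rewrite -[X in X <= _]mul1n; apply: leq_mul; first exact: colorings_on_pair_gt0.
rewrite (eq_bigl (fun v => v \in [set v | 0 < r v])) => [|v]; last by rewrite inE.
by apply: (prod_subn_ge (a := a) (b := b)); rewrite ?inE // => v /[!inE]; apply: d1.
Qed.
End GreedyColoring.

Lemma backdeg_le_size n (adj : rel 'I_n) (r : 'I_n -> nat) (v : 'I_n) (s : seq nat) :
  (forall u, r u < r v -> adj v u -> val u \in s) -> backdeg adj r v <= size s.
Proof.
move=> back_s; rewrite /backdeg cardE -(size_map val); apply: uniq_leq_size.
  by rewrite map_inj_uniq ?enum_uniq //; exact: val_inj.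
by move=> _ /mapP[u + ->]; rewrite mem_enum inE => /andP[]; exact: back_s.
Qed.

(* Splits innermost conditionals first, so that no introduced condition contains an [if]. *)
Ltac case_ifs := repeat match goal with
  |- context [if ?b then _ else _] =>
    lazymatch b with context [if _ then _ else _] => fail | _ =>
      case: (boolP b) => /= [/eqP ?|?]; try subst end end.

Ltac split_hyps :=
  repeat match goal with
  | H : is_true (_ || _) |- _ => case/orP: H => H
  | H : is_true (_ && _) |- _ => case/andP: H => H ?
  | H : is_true (_ == _) |- _ => move/eqP: H => H; subst
  end.

Ltac theta_lia :=
  intros; unfold theta_nv, theta_dir_edge in *; split_hyps;
  repeat match goal with H : context [if _ then _ else _] |- _ => revert H end;
  case_ifs; intros; split_hyps; lia.

Lemma theta_adj_sym k : symmetric (theta_adj k).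
Proof. by move=> u v; rewrite /theta_adj orbC. Qed.

Lemma theta_adj_irr k : irreflexive (theta_adj k).
Proof. by move=> v; rewrite /theta_adj orbb; theta_lia. Qed.

Lemma theta_nbr_mid k v u : 2 <= v <= 3 ->
  theta_dir_edge k v u || theta_dir_edge k u v -> u \in [:: 0; 1].
Proof. rewrite !inE; theta_lia. Qed.

Lemma theta_nbr_last k u : 2 <= k ->
  theta_dir_edge k (2 * k + 2) u || theta_dir_edge k u (2 * k + 2) ->
  u \in [:: 2 * k + 1; 1].
Proof. rewrite !inE; theta_lia. Qed.

Section ShortEdge.

Variables (k e p : nat).
Hypotheses (k_ge2 : 2 <= k) (e_end : e <= 1) (p_mid : 2 <= p <= 3).

Definition short_rank (v : nat) : nat :=
  if (v == e) || (v == p) then 0 else if v == 1 - e then 1 else if v == 5 - p then 2 else v - 1.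

Definition short_parent (v : nat) : nat :=
  if v == 1 - e then p else if v == 4 then 0 else v - 1.

Lemma short_rank_eq0 v : v < theta_nv k -> (short_rank v == 0) = (v == e) || (v == p).
Proof. rewrite /short_rank; theta_lia. Qed.

Lemma short_rank_inj v v' : v < theta_nv k -> v' < theta_nv k ->
  0 < short_rank v -> short_rank v = short_rank v' -> v = v'.
Proof. rewrite /short_rank; theta_lia. Qed.

Lemma short_rank_parent v u : v < theta_nv k -> u < theta_nv k ->
  v != 5 - p -> v != 2 * k + 2 -> short_rank u < short_rank v ->
  theta_dir_edge k v u || theta_dir_edge k u v -> u = short_parent v.
Proof. rewrite /short_rank /short_parent; theta_lia. Qed.

End ShortEdge.

Section LongEdge.

Variables (k j : nat).
Hypotheses (k_ge2 : 2 <= k) (j_lt : j < 2 * k).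

(* Position on the long path 0, 4, 5, ..., 2k+2, 1. *)
Definition long_pos (v : nat) : nat := if v == 0 then 0 else if v == 1 then 2 * k else v - 3.

Definition long_vertex (q : nat) : nat := if q == 0 then 0 else if q == 2 * k then 1 else q + 3.

Definition long_rank (v : nat) : nat :=
  if v == 2 then 2 * k else if v == 3 then 2 * k + 1
  else if j + 1 < long_pos v then long_pos v - j - 1
  else if long_pos v < j then 2 * k - 1 - long_pos v
  else 0.

Definition long_parent (v : nat) : nat :=
  long_vertex (if j + 1 < long_pos v then long_pos v - 1 else long_pos v + 1).

Lemma long_rank_eq0 v : v < theta_nv k ->
  (long_rank v == 0) = (v == long_vertex j) || (v == long_vertex j.+1).
Proof. rewrite /long_rank /long_vertex /long_pos; theta_lia. Qed.

Lemma long_rank_inj v v' : v < theta_nv k -> v' < theta_nv k ->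
  0 < long_rank v -> long_rank v = long_rank v' -> v = v'.
Proof. rewrite /long_rank /long_pos; theta_lia. Qed.

Lemma long_rank_parent v u : v < theta_nv k -> u < theta_nv k ->
  ~~ (2 <= v <= 3) -> long_rank u < long_rank v ->
  theta_dir_edge k v u || theta_dir_edge k u v -> u = long_parent v.
Proof. rewrite /long_rank /long_parent /long_vertex /long_pos; theta_lia. Qed.

End LongEdge.

Lemma theta_dir_edge_cases k v u : theta_dir_edge k v u ->
  [|| (v <= 1) && (2 <= u <= 3), (2 <= v <= 3) && (u <= 1)
    | ~~ (2 <= v <= 3) && ~~ (2 <= u <= 3)].
Proof. theta_lia. Qed.

Lemma long_edge_pos k v u : 2 <= k -> theta_dir_edge k v u ->
  ~~ (2 <= v <= 3) -> ~~ (2 <= u <= 3) ->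
  [/\ long_pos k v < 2 * k, long_vertex k (long_pos k v) = v
    & long_vertex k (long_pos k v).+1 = u].
Proof. by rewrite /long_pos /long_vertex => *; split; theta_lia. Qed.

Lemma short_greedy_order k (e p : 'I_(theta_nv k)) : 2 <= k -> e <= 1 -> 2 <= p <= 3 ->
  exists r a b, greedy_order (theta_adj k) [set e; p] r a b.
Proof.
move=> k_ge2 e_end p_mid.
have a_lt : 5 - p < theta_nv k by rewrite /theta_nv; lia.
have b_lt : 2 * k + 2 < theta_nv k by rewrite /theta_nv; lia.
exists (fun v : 'I_(theta_nv k) => short_rank e p v), (Ordinal a_lt), (Ordinal b_lt); split.
- by move=> v; rewrite (short_rank_eq0 k_ge2 e_end p_mid (ltn_ord v)) !inE -!val_eqE.
- move=> v v' /[!inE] rv _ rvv'; apply: val_inj.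
  exact: (short_rank_inj k_ge2 e_end p_mid (ltn_ord v) (ltn_ord v')).
- split; rewrite ?lt0n ?(short_rank_eq0 k_ge2 e_end p_mid) -?val_eqE //=; lia.
- split.
  + apply: (backdeg_le_size (s := [:: 0; 1])) => u _; apply: theta_nbr_mid => /=; lia.
  + by apply: (backdeg_le_size (s := [:: 2 * k + 1; 1])) => u _; apply: theta_nbr_last.
- move=> v rv va vb; apply: (backdeg_le_size (s := [:: short_parent e p v])) => u ruv vu.
  rewrite inE; apply/eqP.
  apply: (short_rank_parent k_ge2 e_end p_mid (ltn_ord v) (ltn_ord u)) => //;
    by rewrite -val_eqE in va vb.
Qed.

Lemma long_greedy_order k (v0 u0 : 'I_(theta_nv k)) : 2 <= k -> theta_dir_edge k v0 u0 ->
  ~~ (2 <= v0 <= 3) -> ~~ (2 <= u0 <= 3) ->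
  exists r a b, greedy_order (theta_adj k) [set v0; u0] r a b.
Proof.
move=> k_ge2 edge v0_long u0_long.
have [j_lt v0E u0E] := long_edge_pos k_ge2 edge v0_long u0_long.
set j := long_pos k v0 in j_lt v0E u0E.
have a_lt : 2 < theta_nv k by rewrite /theta_nv; lia.
have b_lt : 3 < theta_nv k by rewrite /theta_nv; lia.
exists (fun v : 'I_(theta_nv k) => long_rank k j v), (Ordinal a_lt), (Ordinal b_lt); split.
- by move=> v; rewrite (long_rank_eq0 k_ge2 j_lt (ltn_ord v)) v0E u0E !inE -!val_eqE.
- move=> v v' /[!inE] rv _ rvv'; apply: val_inj.
  exact: (long_rank_inj k_ge2 j_lt (ltn_ord v) (ltn_ord v')).
- by rewrite -val_eqE /= /long_rank /=; split => //; lia.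
- by split; apply: (backdeg_le_size (s := [:: 0; 1])) => u _; apply: theta_nbr_mid.
- move=> v rv va vb; apply: (backdeg_le_size (s := [:: long_parent k j v])) => u ruv vu.
  rewrite inE; apply/eqP; apply: (long_rank_parent k_ge2 j_lt (ltn_ord v) (ltn_ord u)) => //.
  by rewrite -!val_eqE /= in va vb; lia.
Qed.

Lemma theta_greedy_order k (v u : 'I_(theta_nv k)) : 2 <= k -> theta_adj k v u ->
  exists r a b, greedy_order (theta_adj k) [set v; u] r a b.
Proof.
move=> k_ge2; wlog edge : v u / theta_dir_edge k v u.
  move=> gen /orP[] edge; [|rewrite setUC];
    by apply: (gen _ _ edge); rewrite /theta_adj edge.
move=> _; case/or3P: (theta_dir_edge_cases edge) => /andP[vP uP].
- exact: short_greedy_order.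
- by rewrite setUC; apply: short_greedy_order.
- exact: long_greedy_order.
Qed.

Theorem lemma23 (k m : nat) (C : finType) (L : 'I_(theta_nv k) -> {set C})
    (w z : 'I_(theta_nv k)) (x y : C) :
  2 <= k -> 4 <= m ->
  (forall v, #|L v| = m) ->
  theta_adj k w z ->
  x \in L w :\: L z -> y \in L z :\: L w ->
  (m - 1) ^ (2 * k - 1) * (m - 2) ^ 2 <=
  #|[set f : {ffun 'I_(theta_nv k) -> C} |
       [&& proper_L_coloring L f, f w == x & f z == y]]|.
Proof.
move=> k_ge2 _ card_L wz /setDP[xw xNz] /setDP[yz _].
have xy : x != y by apply: contraNneq xNz => ->.
have w_ne_z : w != z by apply: contraTneq wz => ->; rewrite theta_adj_irr.
have [r [a [b order]]] := theta_greedy_order k_ge2 wz.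
have := card_colorings_greedy_order (@theta_adj_sym k) (@theta_adj_irr k) card_L
  w_ne_z xw yz xy order.
rewrite colorings_on_setT card_ord /theta_nv (_ : 2 * k + 3 - 4 = 2 * k - 1); last by lia.
move/leq_trans; apply; apply/eq_leq/eq_card => f.
by rewrite !inE /proper_L_coloring !andbA.
Qed.
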